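(* Let $A$ be a commutative ring, $E$ a non-zero $A$-module and $R=A\propto E$ the trivial ring extension of $A$ by $E$. Then $R$ is Gaussian if and only if $A$ is Gaussian and $aE=a^2E$ for each $a\in A$.
   Context: All rings are commutative with identity. The trivial ring extension $R=A\propto E$ is the ring with underlying additive group $A\times E$ and multiplication $(a,e)(a',e')=(aa',ae'+a'e)$. For $f\in R[X]$, the content $c(f)$ is the ideal generated by the coefficients of $f$; $R$ is Gaussian if $c(fg)=c(f)c(g)$ for all $f,g\in R[X]$. *)

From HB Require Import structures.
From mathcomp Require Import all_boot all_order all_algebra.
Set Implicit Arguments. Unset Strict Implicit. Unset Printing Implicit Defensive.
Import GRing.Theory.
Local Open Scope ring_scope.

Section TrivExt.
Variables (A : comNzRingType) (E : lmodType A).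

Definition triv_ext : Type := (A * E)%type.
HB.instance Definition _ := Choice.on triv_ext.
HB.instance Definition _ := GRing.Zmodule.on triv_ext.

Definition te_one : triv_ext := (1, 0).
Definition te_mul (x y : triv_ext) : triv_ext :=
  (x.1 * y.1, x.1 *: y.2 + y.1 *: x.2).

Lemma te_mulA : associative te_mul.
Proof.
move=> [a e] [b f] [c g]; rewrite /te_mul /=; congr (_, _); first by rewrite mulrA.
by rewrite !scalerDr !scalerA [c * a]mulrC [c * b]mulrC !addrA.
Qed.

Lemma te_mulC : commutative te_mul.
Proof. by move=> [a e] [b f]; rewrite /te_mul /= mulrC addrC. Qed.

Lemma te_mul1 : left_id te_one te_mul.
Proof. by move=> [a e]; rewrite /te_mul /= mul1r scale1r scaler0 addr0. Qed.

Lemma te_mulDl : left_distributive te_mul +%R.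
Proof.
move=> [a e] [b f] [c g]; rewrite /te_mul /=; congr (_, _); first by rewrite mulrDl.
rewrite scalerDl scalerDr -!addrA; congr (_ + _).
by rewrite addrC -!addrA; congr (_ + _); rewrite addrC.
Qed.

Lemma te_one_neq0 : te_one != 0.
Proof. by apply/negP => /eqP [] /eqP; rewrite oner_eq0. Qed.

HB.instance Definition _ := GRing.Zmodule_isComNzRing.Build triv_ext
  te_mulA te_mulC te_mul1 te_mulDl te_one_neq0.

End TrivExt.
Arguments triv_ext : clear implicits.


Section Gaussian.
Variable R : comNzRingType.

Definition in_ideal_gen (s : seq R) (x : R) : Prop :=
  exists r : 'I_(size s) -> R, x = \sum_(i < size s) r i * s`_i.

Definition content (f : {poly R}) : R -> Prop := in_ideal_gen (polyseq f).

Definition ideal_mul (I J : R -> Prop) (x : R) : Prop :=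
  exists n (a b : 'I_n -> R),
    (forall i, I (a i) /\ J (b i)) /\ x = \sum_(i < n) a i * b i.

Definition gaussian : Prop :=
  forall f g : {poly R}, forall x : R,
    content (f * g) x <-> ideal_mul (content f) (content g) x.
End Gaussian.

(* Both directions are checked on products of coefficients: a ring is
   Gaussian iff c(fg) contains every f_i g_j.
   Necessity: A is a retract of R = A ∝ E, so A inherits Gaussianity; and for
   f = (a,0) + (0,e)X, g = (a,0) - (0,e)X we have fg = (a²,0), so
   f_1 g_0 = (0, ae) ∈ c(fg) gives ae ∈ a²E.
   Sufficiency: the s ∈ A with (s,0) f_i g_j ∈ c(fg) form an ideal, so it is
   enough to find one outside any given prime P. Up to factors outside P, the
   squares of a Gaussian ring are totally ordered by divisibility, so f has a
   coefficient f_t whose first component a dominates, and f = a f0 + z with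
   f0_t invertible mod P, a z = 0 and z nilpotent. Since aE = a²E, elements of
   square zero annihilate E, and with the dominance of a over the dominant
   coefficient of g this makes z g vanish (after the symmetric choice if g
   dominates). A McCoy-type argument along the regular coefficient f0_t then
   puts every g_j in c(f0 g), hence f_i g_j in c(fg), modulo factors outside P. *)

From HB Require Import structures.
From mathcomp Require Import all_boot all_order all_algebra.
From mathcomp Require Import ring zify.
From mathcomp Require Import boolp classical_sets.
Set Implicit Arguments. Unset Strict Implicit. Unset Printing Implicit Defensive.
Import GRing.Theory.
Local Open Scope ring_scope.

Section Ideals.
Variable R : comNzRingType.
Local Open Scope classical_set_scope.

Definition is_ideal (I : R -> Prop) :=
  [/\ I 0, forall x y, I x -> I y -> I (x + y) & forall x y, I y -> I (x * y)].

Definition is_prime_ideal (P : R -> Prop) :=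
  [/\ is_ideal P, ~ P 1 & forall x y, P (x * y) -> P x \/ P y].

Lemma exists_maximal_ideal_above (L : R -> Prop) : is_ideal L -> ~ L 1 ->
  exists M, [/\ is_ideal M, L `<=` M, ~ M 1 &
    forall B, is_ideal B -> ~ B 1 -> ~ M `<` B].
Proof.
move=> L_ideal nL1.
(* [Zorn_bigcup] also asks for the union of the empty chain, hence [set0]. *)
pose proper_above (J : set R) := J = set0 \/ [/\ is_ideal J, L `<=` J & ~ J 1].
have [M [[M0|M_ok] Mmax]] : exists M, proper_above M /\
    forall B, M `<` B -> ~ proper_above B.
- apply: Zorn_bigcup => F Fok Ftot.
  have [[Y FY Yx]|Fempty] := EM (exists2 X, F X & X !=set0); last first.
    left; apply/seteqP; split => // x [X FX Xx]; apply: Fempty; exists X => //.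
    by exists x.
  have Fideal X : F X -> X !=set0 -> [/\ is_ideal X, L `<=` X & ~ X 1].
    by move=> FX [x Xx]; case: (Fok X FX) => // X0; rewrite X0 in Xx.
  have inF X x : F X -> X x -> [/\ is_ideal X, L `<=` X & ~ X 1].
    by move=> FX Xx; apply: Fideal => //; exists x.
  have [_ LY _] := Fideal Y FY Yx.
  right; split.
  + split.
    * by have [[Y0 _ _] _ _] := Fideal Y FY Yx; exists Y.
    * move=> x y [X FX Xx] [X' FX' X'y].
      have [[_ XD _] _ _] := inF X x FX Xx; have [[_ X'D _] _ _] := inF X' y FX' X'y.
      case: (Ftot X X' FX FX') => [XX'|X'X].
        by exists X' => //; apply: X'D => //; apply: XX'.
      by exists X => //; apply: XD => //; apply: X'X.
    * move=> x y [X FX Xy]; have [[_ _ XM] _ _] := inF X y FX Xy.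
      by exists X => //; apply: XM.
  + by move=> x Lx; exists Y => //; apply: LY.
  + by move=> [X FX X1]; have [_ _] := inF X 1 FX X1.
- exfalso; apply: (Mmax L); last by right; split.
  by rewrite M0; split => //; move=> /(_ 0); have [L0 _ _] := L_ideal; apply.
- have [M_ideal LM nM1] := M_ok.
  by exists M; split => // B B_ideal nB1 MB; apply: (Mmax B MB); right; split => //;
    apply: subset_trans LM (properW MB).
Qed.

Lemma maximal_ideal_prime (M : R -> Prop) : is_ideal M -> ~ M 1 ->
  (forall B, is_ideal B -> ~ B 1 -> ~ M `<` B) -> is_prime_ideal M.
Proof.
move=> M_ideal nM1 Mmax; have [M0 MD MM] := M_ideal; split => // x y Mxy.
have [Mx|nMx] := EM (M x); [by left|right].
pose B z := exists m r, M m /\ z = m + r * x.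
have [m [r [Mm e1]]] : B 1.
  apply: contrapT => nB1; apply: (Mmax B) => //.
    split; first by exists 0, 0; rewrite mul0r addr0.
      move=> _ _ [m [r [Mm ->]]] [m' [r' [Mm' ->]]].
      by exists (m + m'), (r + r'); split; [apply: MD|rewrite mulrDl addrACA].
    move=> z _ [m [r [Mm ->]]]; exists (z * m), (z * r); split; first exact: MM.
    by rewrite mulrDr mulrA.
  split; first by move=> z Mz; exists z, 0; rewrite mul0r addr0.
  by move=> /(_ x) BM; apply/nMx/BM; exists 0, 1; rewrite add0r mul1r.
have -> : y = m * y + r * (x * y) by rewrite mulrA -mulrDl -e1 mul1r.
by apply: MD; [rewrite mulrC|]; apply: MM.
Qed.

Lemma ideal1_of_avoids_primes (L : R -> Prop) : is_ideal L ->
  (forall P, is_prime_ideal P -> exists2 s, ~ P s & L s) -> L 1.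
Proof.
move=> L_ideal Lavoid; apply: contrapT => nL1.
have [M [M_ideal LM nM1 Mmax]] := exists_maximal_ideal_above L_ideal nL1.
have [s nMs Ls] := Lavoid M (maximal_ideal_prime M_ideal nM1 Mmax).
exact/nMs/LM.
Qed.
End Ideals.

Section CoefsInIdeal.
Variables (R : comNzRingType) (N : R -> Prop) (N_ideal : is_ideal N).
Implicit Types p q : {poly R}.

Lemma ideal_sub x y : N x -> N y -> N (x - y).
Proof.
by case: N_ideal => _ ND NM Nx Ny; apply: ND => //; rewrite -mulN1r; apply: NM.
Qed.

Lemma ideal_coefM_term p q i d :
  (forall k, (d < k)%N -> N q`_k) ->
  (forall l, (i < l)%N -> forall j, N (p`_l * q`_j)) ->
  N ((p * q)`_(i + d)) -> N (p`_i * q`_d).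
Proof.
case: N_ideal => N0 ND NM qN pqN Npq.
have lti : (i < (i + d).+1)%N by rewrite ltnS leq_addr.
move: Npq; rewrite coefM (bigD1 (Ordinal lti)) //= addKn => Npq.
rewrite -[_ * _](addrK (\sum_(l < _ | l != Ordinal lti) p`_l * q`_(i + d - l))).
apply: ideal_sub => //; apply: (big_ind N) => // l ne_li.
have {}ne_li : (l : nat) != i by apply: contra ne_li => /eqP eli; apply/eqP/val_inj.
case: ltngtP ne_li => // [lti' _|ltil _]; last exact: pqN.
by apply: NM; apply: qN; move: (ltn_ord l) lti'; lia.
Qed.

Lemma ideal_coefs_of_regular_coef p t :
  (forall x, N (p`_t * x) -> N x) ->
  forall q, (forall k, N ((p * q)`_k)) -> forall j, N q`_j.
Proof.
case: N_ideal => N0 _ NM pt_reg.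
suff bounded d q : (forall k, (d <= k)%N -> N q`_k) ->
    (forall k, N ((p * q)`_k)) -> forall j, N q`_j.
  by move=> q; apply: (bounded (size q)) => k /(nth_default 0) ->.
elim: d q => [|d IHd] q qN pqN; first by move=> j; apply: qN.
have prodN m i : (size p <= i + m)%N -> forall j, N (p`_i * q`_j).
  elim: m i => [|m IHm] i le_pi j.
    by rewrite addn0 in le_pi; rewrite nth_default // mul0r.
  have pl_qN l : (i < l)%N -> forall j, N (p`_l * q`_j).
    by move=> ltil; apply: IHm; rewrite (leq_trans le_pi) // -addSnnS leq_add2r.
  have pi_qd : N (p`_i * q`_d).
    by apply: ideal_coefM_term => // k ltdk; apply: qN.
  suff /(_ j) : forall j, N ((p`_i *: q)`_j) by rewrite coefZ.
  apply: IHd => [k|k]; last by rewrite -scalerAr coefZ; apply: NM.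
  by rewrite coefZ leq_eqVlt => /orP[/eqP <-|ltdk] //; apply/NM/qN.
apply: IHd => // k; rewrite leq_eqVlt => /orP[/eqP <-|]; last exact: qN.
by apply/pt_reg/(prodN (size p)); rewrite leq_addl.
Qed.

End CoefsInIdeal.

Section Content.
Variable R : comNzRingType.
Implicit Types (p q : {poly R}) (I J : R -> Prop).

Lemma contentP p x :
  content p x <-> exists r : nat -> R, x = \sum_(i < size p) r i * p`_i.
Proof.
split=> [[r ->]|[r ->]]; last by exists (fun i => r i).
exists (fun k => if insub k is Some i then r i else 0).
by apply: eq_bigr => i _; rewrite valK.
Qed.

Lemma content0 p : content p 0.
Proof. by apply/contentP; exists (fun=> 0); rewrite big1 // => i _; rewrite mul0r. Qed.

Lemma contentD p x y : content p x -> content p y -> content p (x + y).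
Proof.
move=> /contentP[r ->] /contentP[r' ->]; rewrite -big_split /=.
by apply/contentP; exists (fun i => r i + r' i); apply: eq_bigr => i _; rewrite mulrDl.
Qed.

Lemma contentMl p c x : content p x -> content p (c * x).
Proof.
move=> /contentP[r ->]; rewrite mulr_sumr.
by apply/contentP; exists (fun i => c * r i); apply: eq_bigr => i _; rewrite mulrA.
Qed.

Lemma content_ideal p : is_ideal (content p).
Proof. by split=> [|x y|x y]; [apply: content0|apply: contentD|apply: contentMl]. Qed.

Lemma content_sum p n (F : 'I_n -> R) :
  (forall i, content p (F i)) -> content p (\sum_(i < n) F i).
Proof.
by move=> pF; apply: (big_ind (content p)) => //; [apply: content0|apply: contentD].
Qed.

Lemma content_coef p i : content p p`_i.
Proof.
apply/contentP; exists (fun k => (k == i)%:R).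
have [lti|] := ltnP i (size p); last first.
  move=> lei; rewrite nth_default // big1 // => k _.
  by rewrite (ltn_eqF (leq_trans (ltn_ord k) lei)) mul0r.
rewrite (bigD1 (Ordinal lti)) //= eqxx mul1r big1 ?addr0 // => k.
by rewrite -val_eqE /= => /negbTE ->; rewrite mul0r.
Qed.

Lemma content_lin p n (r : nat -> R) : content p (\sum_(i < n) r i * p`_i).
Proof. by apply: content_sum => i; apply/contentMl/content_coef. Qed.

Lemma content_leqP p n x : (size p <= n)%N ->
  content p x <-> exists r : nat -> R, x = \sum_(i < n) r i * p`_i.
Proof.
move=> le_pn; split=> [/contentP[r ->]|[r ->]]; last exact: content_lin.
exists r; rewrite (big_ord_widen n (fun i => r i * p`_i)) // big_mkcond /=.
apply: eq_bigr => i _; case: ifP => // /negbT; rewrite -leqNgt.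
by move=> /(nth_default 0) ->; rewrite mulr0.
Qed.

Lemma content_polyC (c x : R) : content c%:P x <-> exists r, x = r * c.
Proof.
rewrite (content_leqP (n := 1)) ?size_polyC ?leq_b1 //.
split=> [[r ->]|[r ->]]; first by exists (r 0%N); rewrite big_ord1 coefC.
by exists (fun=> r); rewrite big_ord1 coefC.
Qed.

Lemma content_transfer p q (c d : R) x :
  (forall k, c * p`_k = d * q`_k) -> content p x -> content q (c * x).
Proof.
move=> cpq /contentP[r ->]; rewrite mulr_sumr; apply: content_sum => i.
by rewrite mulrCA cpq mulrA; apply/contentMl/content_coef.
Qed.

Lemma ideal_mul0 I J : ideal_mul I J 0.
Proof. by exists 0%N, (fun=> 0), (fun=> 0); split => [[]|]; rewrite ?big_ord0. Qed.

Lemma ideal_mulD I J x y :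
  ideal_mul I J x -> ideal_mul I J y -> ideal_mul I J (x + y).
Proof.
move=> [n [a [b [Hab ->]]]] [m [a' [b' [Hab' ->]]]].
pose glue (f : 'I_n -> R) (f' : 'I_m -> R) i :=
  match split i with inl k => f k | inr k => f' k end.
exists (n + m)%N, (glue a a'), (glue b b'); split.
  by move=> i; rewrite /glue; case: (split i).
by rewrite big_split_ord /glue; congr (_ + _); apply: eq_bigr => i _;
  rewrite ?(unsplitK (inl _)) ?(unsplitK (inr _)).
Qed.

Lemma ideal_mul_prod I J a b : I a -> J b -> ideal_mul I J (a * b).
Proof. by move=> Ia Jb; exists 1%N, (fun=> a), (fun=> b); rewrite big_ord1. Qed.

Lemma content_mul_sub p q x :
  content (p * q) x -> ideal_mul (content p) (content q) x.
Proof.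
move=> /contentP[r ->]; apply: (big_ind (ideal_mul _ _)) => [||k _].
- exact: ideal_mul0.
- exact: ideal_mulD.
rewrite coefM mulr_sumr; apply: (big_ind (ideal_mul _ _)) => [||j _].
- exact: ideal_mul0.
- exact: ideal_mulD.
by rewrite mulrA; apply: ideal_mul_prod; [apply/contentMl|]; apply: content_coef.
Qed.

Lemma gaussianP :
  gaussian R <-> forall p q i j, content (p * q) (p`_i * q`_j).
Proof.
split=> [gR p q i j|Hcoef p q x]; first by apply/gR/ideal_mul_prod; apply: content_coef.
split; first exact: content_mul_sub.
move=> [n [a [b [Hab ->]]]]; apply: content_sum => k.
have [/contentP[r ->] /contentP[r' ->]] := Hab k.
rewrite mulr_suml; apply: content_sum => i; rewrite mulr_sumr; apply: content_sum => j.
by rewrite mulrACA; apply/contentMl/Hcoef.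
Qed.

End Content.

Lemma content_map (R S : comNzRingType) (f : {rmorphism R -> S}) (p : {poly R}) x :
  content p x -> content (map_poly f p) (f x).
Proof.
move=> /contentP[r ->]; rewrite rmorph_sum; apply: content_sum => i.
by rewrite rmorphM -coef_map; apply/contentMl/content_coef.
Qed.

Lemma content_quad (R : comNzRingType) (c0 c1 c2 x : R) :
  content (c0%:P + c1%:P * 'X + c2%:P * 'X^2) x ->
  exists r0 r1 r2, x = r0 * c0 + r1 * c1 + r2 * c2.
Proof.
set h := _ + _ * 'X^2.
have hE i : h`_i = [:: c0; c1; c2]`_i.
  rewrite !coefD coefC coefCM coefCM coefX coefXn.
  by case: i => [|[|[|i]]] /=; rewrite ?mulr0 ?mulr1 ?addr0 ?add0r // nth_nil.
have size_h : (size h <= 3)%N.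
  by apply/leq_sizeP => i lei; rewrite hE nth_default.
rewrite (content_leqP (n := 3)) // => -[r ->].
by exists (r 0%N), (r 1%N), (r 2%N); rewrite !big_ord_recr big_ord0 /= !hE add0r.
Qed.

Section GaussianRing.
Variables (R : comNzRingType) (R_gauss : gaussian R).
Implicit Types a b c u v x : R.

Lemma gaussian_linear_prod a0 a1 b0 b1 x :
  [\/ x = a0 * b0, x = a0 * b1, x = a1 * b0 | x = a1 * b1] ->
  exists r0 r1 r2, x = r0 * (a0 * b0) + r1 * (a0 * b1 + a1 * b0) + r2 * (a1 * b1).
Proof.
pose f := a0%:P + a1%:P * 'X; pose g := b0%:P + b1%:P * 'X.
have coef_lin (c0 c1 : R) :
    (c0%:P + c1%:P * 'X)`_0 = c0 /\ (c0%:P + c1%:P * 'X)`_1 = c1.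
  by rewrite !coefD !coefC !coefCM !coefX /= mulr0 mulr1 addr0 add0r.
have [[f0 f1] [g0 g1]] := (coef_lin a0 a1, coef_lin b0 b1).
have fgE : f * g = (a0 * b0)%:P + (a0 * b1 + a1 * b0)%:P * 'X + (a1 * b1)%:P * 'X^2.
  by rewrite /f /g !polyCM polyCD; ring.
move=> x_prod; apply: content_quad; rewrite -fgE.
move/gaussianP: R_gauss => /(_ f g) fg.
case: x_prod => ->.
- by have := fg 0%N 0%N; rewrite f0 g0.
- by have := fg 0%N 1%N; rewrite f0 g1.
- by have := fg 1%N 0%N; rewrite f1 g0.
- by have := fg 1%N 1%N; rewrite f1 g1.
Qed.

Lemma mul_in_sqr_ideal a b : exists u v, a * b = u * a ^+ 2 + v * b ^+ 2.
Proof.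
have [r0 [r1 [r2 ab]]] := @gaussian_linear_prod a b a (- b) _ (Or43 _ _ _ erefl).
by exists r0, (- r2); rewrite mulrC ab; ring.
Qed.

Lemma mul_eq0_of_sqr_eq0 x y : x ^+ 2 = 0 -> y ^+ 2 = 0 -> x * y = 0.
Proof.
by move=> x2 y2; have [u [v ->]] := mul_in_sqr_ideal x y; rewrite x2 y2 !mulr0 addr0.
Qed.

Lemma sqr_eq0_of_mul_eq0 a c xi : a * c = 0 -> c ^+ 2 = xi * a ^+ 2 -> c ^+ 2 = 0.
Proof.
move=> ac0 c2.
have [r0 [r1 [r2 cc]]] := @gaussian_linear_prod a c c (- (xi * a)) _ (Or43 _ _ _ erefl).
rewrite expr2 cc.
have -> : a * - (xi * a) + c * c = 0 by rewrite -expr2 c2; ring.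
have -> : c * - (xi * a) = - xi * (a * c) by ring.
by rewrite ac0 !mulr0 !addr0.
Qed.

Lemma sqr_in_cross_ideal a c : exists p q, a ^+ 2 = p * (a * c) + q * (a ^+ 2 + c ^+ 2).
Proof.
have [r0 [r1 [r2 a2]]] := @gaussian_linear_prod a c c a _ (Or42 _ _ _ erefl).
by exists (r0 + r2), r1; rewrite [LHS]expr2 a2; ring.
Qed.

Lemma sqr_term_in_mul_ideal a b u v : a * b = u * a ^+ 2 + v * b ^+ 2 ->
  exists w, u * a ^+ 2 = w * (a * b).
Proof.
move=> ab.
have [r0 [r1 [r2 E]]] :=
  @gaussian_linear_prod a b (v * b) (u * a) _ (Or42 _ _ _ erefl).
exists (r0 * v + r1 + r2 * u).
rewrite expr2 (mulrCA u) E.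
have -> : a * (u * a) + b * (v * b) = a * b by rewrite ab; ring.
ring.
Qed.

End GaussianRing.

Section SqrDvdAtPrime.
Variables (R : comNzRingType) (P : R -> Prop) (P_prime : is_prime_ideal P).
Implicit Types a b c u v x y s : R.

Lemma prime_add x y : P x -> P y -> P (x + y).
Proof. by case: P_prime => -[_ PD _] _ _; apply: PD. Qed.

Lemma prime_mull x y : P y -> P (x * y).
Proof. by case: P_prime => -[_ _ PM] _ _; apply: PM. Qed.

Lemma prime_mulr x y : P x -> P (x * y).
Proof. by rewrite mulrC; apply: prime_mull. Qed.

Lemma notprime_mul x y : ~ P x -> ~ P y -> ~ P (x * y).
Proof. by case: P_prime => _ _ Pxy nPx nPy /Pxy[]. Qed.

Lemma notprime_sub x y : P x -> ~ P y -> ~ P (y - x).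
Proof.
move=> Px nPy Pyx; apply: nPy; rewrite -(subrK x y); apply: prime_add => //.
Qed.

Lemma notprime_1sub x : P x -> ~ P (1 - x).
Proof. by case: P_prime => _ nP1 _ Px; apply: notprime_sub. Qed.

(* b² ∈ a² R_P *)
Definition sqr_dvd_at a b := exists2 s, ~ P s & exists x, s * b ^+ 2 = x * a ^+ 2.

Lemma sqr_dvd_at_refl a : sqr_dvd_at a a.
Proof. by case: P_prime => _ nP1 _; exists 1 => //; exists 1. Qed.

Lemma sqr_dvd_at_trans a b c : sqr_dvd_at a b -> sqr_dvd_at b c -> sqr_dvd_at a c.
Proof.
move=> [s nPs [x sb]] [s' nPs' [x' s'c]]; exists (s' * s); first exact: notprime_mul.
by exists (x' * x); rewrite -mulrA mulrCA s'c mulrCA sb mulrA.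
Qed.

Lemma common_multiplier (Q : nat -> R -> Prop) n :
  (forall i s r, Q i s -> Q i (r * s)) ->
  (forall i, (i < n)%N -> exists2 s, ~ P s & Q i s) ->
  exists2 s, ~ P s & forall i, (i < n)%N -> Q i s.
Proof.
move=> QM; elim: n => [|n IHn] Qn.
  by case: P_prime => _ nP1 _; exists 1.
have [s nPs Qs] := IHn (fun i lti => Qn i (ltnW lti)).
have [s' nPs' Qs'] := Qn n (ltnSn n).
exists (s' * s); first exact: notprime_mul.
move=> i; rewrite ltnS leq_eqVlt => /orP[/eqP ->|lti].
  by rewrite mulrC; apply: QM.
exact/QM/Qs.
Qed.

Variable R_gauss : gaussian R.

Lemma sqr_dvd_at_decomp a b : sqr_dvd_at a b ->
  exists s y c, [/\ ~ P s, s * b = y * a + c, a * c = 0 & c ^+ 2 = 0].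
Proof.
move=> [s nPs [x sb]].
have [al [be ab]] := mul_in_sqr_ideal R_gauss a b.
pose y := s * al + be * x.
have sab : s * (a * b) = y * a ^+ 2.
  have -> : s * (a * b) = s * al * a ^+ 2 + be * (s * b ^+ 2) by rewrite ab; ring.
  by rewrite sb /y; ring.
have ac0 : a * (s * b - y * a) = 0 by rewrite mulrBr mulrCA sab; ring.
exists s, y, (s * b - y * a); split => //; first by rewrite addrC subrK.
apply: (sqr_eq0_of_mul_eq0 R_gauss ac0 (xi := s * x - y ^+ 2)).
have -> : (s * b - y * a) ^+ 2 =
    s * (s * b ^+ 2) - 2%:R * y * (s * (a * b)) + y ^+ 2 * a ^+ 2 by ring.
by rewrite sb sab; ring.
Qed.

Lemma sqr_dvd_at_total_of_prime a b u v : P v ->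
  a * b = u * a ^+ 2 + v * b ^+ 2 -> sqr_dvd_at b a \/ sqr_dvd_at a b.
Proof.
(* Write c := b - u a, so that a c = v b²; the relations of [sqr_in_cross_ideal]
   for a² and c² then give b² | a² if their coefficient q lies in P, and
   a² | b² otherwise. *)
move=> Pv ab; pose c := b - u * a.
have ac : a * c = v * b ^+ 2 by rewrite /c mulrBr ab; ring.
have [p [q a2]] := sqr_in_cross_ideal R_gauss a c.
have [p' [q' c2]] := sqr_in_cross_ideal R_gauss c a.
have [Pq|nPq] := EM (P q).
  left; exists (1 - q * (1 - u ^+ 2)); first by apply: notprime_1sub; apply: prime_mulr.
  exists (p * v + q - 2%:R * q * u * v); apply/eqP; rewrite -subr_eq0; apply/eqP.
  transitivity ((a ^+ 2 - (p * (a * c) + q * (a ^+ 2 + c ^+ 2)))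
                + (p - 2%:R * q * u) * (a * c - v * b ^+ 2)); first by rewrite /c; ring.
  by rewrite -a2 ac; ring.
right; exists (q - v * (q * p' - q' * p + 2%:R * q * u)).
  by apply: notprime_sub nPq; apply: prime_mulr.
exists (q' + q * u ^+ 2); apply/eqP; rewrite -subr_eq0; apply/eqP.
transitivity (- q' * (a ^+ 2 - (p * (a * c) + q * (a ^+ 2 + c ^+ 2)))
  + q * (c ^+ 2 - (p' * (c * a) + q' * (c ^+ 2 + a ^+ 2)))
  + (q * p' - q' * p + 2%:R * q * u) * (a * c - v * b ^+ 2)); first by rewrite /c; ring.
by rewrite -a2 -c2 ac; ring.
Qed.

Lemma sqr_dvd_at_total a b : sqr_dvd_at a b \/ sqr_dvd_at b a.
Proof.
have [u [v ab]] := mul_in_sqr_ideal R_gauss a b.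
have ba : b * a = v * b ^+ 2 + u * a ^+ 2 by rewrite mulrC ab addrC.
have [Pv|nPv] := EM (P v).
  by case: (sqr_dvd_at_total_of_prime Pv ab); [right|left].
have [Pu|nPu] := EM (P u).
  by case: (sqr_dvd_at_total_of_prime Pu ba); [left|right].
have [X ua2] := sqr_term_in_mul_ideal R_gauss ab.
have [X' vb2] := sqr_term_in_mul_ideal R_gauss ba; rewrite [b * a]mulrC in vb2.
have [PX|nPX] := EM (P X); last first.
  left; exists (X * v); first exact: notprime_mul.
  by exists (X' * u); rewrite -mulrA vb2 mulrCA -ua2 mulrA.
have [PX'|nPX'] := EM (P X'); last first.
  right; exists (X' * u); first exact: notprime_mul.
  by exists (X * v); rewrite -mulrA ua2 mulrCA -vb2 mulrA.
right; exists ((1 - (X + X')) * u).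
  by apply: notprime_mul => //; apply: notprime_1sub; apply: prime_add.
exists 0; rewrite mul0r -mulrA ua2 mulrCA.
suff -> : (1 - (X + X')) * (a * b) = 0 by rewrite mulr0.
by rewrite mulrBl mul1r mulrDl -ua2 -vb2 -ab subrr.
Qed.

Lemma exists_sqr_dvd_at_max (f : nat -> R) n :
  exists t, forall i, (i < n)%N -> sqr_dvd_at (f t) (f i).
Proof.
elim: n => [|n [t tmax]]; first by exists 0%N.
have [ftn|fnt] := sqr_dvd_at_total (f t) (f n).
  by exists t => i; rewrite ltnS leq_eqVlt => /orP[/eqP ->|/tmax].
exists n => i; rewrite ltnS leq_eqVlt => /orP[/eqP ->|/tmax].
  exact: sqr_dvd_at_refl.
exact: sqr_dvd_at_trans.
Qed.

Lemma exists_dominant_decomp (f : nat -> R) n : (forall i, (n <= i)%N -> f i = 0) ->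
  exists t s (y c : nat -> R), [/\ ~ P s, y t = s & forall i,
    [/\ s * f i = y i * f t + c i, f t * c i = 0 & c i ^+ 2 = 0]].
Proof.
move=> f_eq0; have [t tmax] := exists_sqr_dvd_at_max f n.
pose Q i s := exists y c, [/\ s * f i = y * f t + c, f t * c = 0 & c ^+ 2 = 0].
have [s nPs Qs] : exists2 s, ~ P s & forall i, (i < n)%N -> Q i s.
  apply: common_multiplier => [i s r [y [c [fi ftc c2]]]|i /tmax /sqr_dvd_at_decomp].
    exists (r * y), (r * c); rewrite -mulrA fi mulrCA ftc mulr0 exprMn c2 mulr0.
    by split=> //; ring.
  by move=> [s [y [c [nPs fi ftc c2]]]]; exists s => //; exists y, c.
have /choice[yc ycP] i : exists yc : R * R,
    [/\ s * f i = yc.1 * f t + yc.2, f t * yc.2 = 0 & yc.2 ^+ 2 = 0].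
  have [/Qs[y [c Qyc]]|/f_eq0 fi0] := ltnP i n; first by exists (y, c).
  by exists (0, 0); rewrite fi0 mulr0 mul0r addr0 mulr0 expr0n.
exists t, s, (fun i => if i == t then s else (yc i).1),
  (fun i => if i == t then 0 else (yc i).2); split=> [||i]; rewrite ?eqxx //.
by case: eqP => [->|_]; [rewrite mulr0 expr0n addr0 mulrC|apply: ycP].
Qed.

End SqrDvdAtPrime.

Section TrivExtMorphisms.
Variables (A : comNzRingType) (E : lmodType A).
Local Notation R := (triv_ext A E).

Lemma te_mulE (a b : A) (e f : E) : ((a, e) : R) * (b, f) = (a * b, a *: f + b *: e).
Proof. by []. Qed.

Definition te_inj (a : A) : R := (a, 0).
Definition te_fst (x : R) : A := x.1.

Lemma te_inj_is_zmod_morphism : zmod_morphism te_inj.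
Proof. by move=> a b; apply: (congr2 pair) => //=; rewrite subr0. Qed.

Lemma te_inj_is_monoid_morphism : monoid_morphism te_inj.
Proof. by split=> // a b; rewrite /te_inj te_mulE !scaler0 addr0. Qed.

HB.instance Definition _ :=
  GRing.isZmodMorphism.Build A R te_inj te_inj_is_zmod_morphism.
HB.instance Definition _ :=
  GRing.isMonoidMorphism.Build A R te_inj te_inj_is_monoid_morphism.

Lemma te_fst_is_zmod_morphism : zmod_morphism te_fst.
Proof. by []. Qed.

Lemma te_fst_is_monoid_morphism : monoid_morphism te_fst.
Proof. by []. Qed.

HB.instance Definition _ :=
  GRing.isZmodMorphism.Build R A te_fst te_fst_is_zmod_morphism.
HB.instance Definition _ :=
  GRing.isMonoidMorphism.Build R A te_fst te_fst_is_monoid_morphism.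

Lemma te_injD (a b : A) : te_inj (a + b) = te_inj a + te_inj b.
Proof. exact: rmorphD. Qed.

Lemma te_injM (a b : A) : te_inj (a * b) = te_inj a * te_inj b.
Proof. exact: rmorphM. Qed.

Lemma te_injK : cancel te_inj te_fst.
Proof. by []. Qed.

Lemma te_injMl (a : A) (x : R) : te_inj a * x = (a * x.1, a *: x.2).
Proof. by case: x => b e; rewrite /te_inj te_mulE scaler0 addr0. Qed.

End TrivExtMorphisms.

Section TrivExtSufficiency.
Variables (A : comNzRingType) (E : lmodType A).
Hypotheses (A_gauss : gaussian A)
  (scale_sqr : forall (a : A) (e : E), exists e', a *: e = a ^+ 2 *: e').
Local Notation R := (triv_ext A E).
Local Notation inj := (te_inj E).

Lemma scale_sqr_eq0 (a : A) (e : E) : a ^+ 2 = 0 -> a *: e = 0.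
Proof. by move=> a2; have [e' ->] := scale_sqr a e; rewrite a2 scale0r. Qed.

Lemma te_mul_sqr_eq0 (x y : R) : x.1 ^+ 2 = 0 -> y.1 ^+ 2 = 0 -> x * y = 0.
Proof.
case: x y => [c z] [k w] /= c2 k2.
by rewrite te_mulE mul_eq0_of_sqr_eq0 // !scale_sqr_eq0 // addr0.
Qed.

Lemma te_mul_ann (a : A) (x y : R) :
  a * x.1 = 0 -> a *: x.2 = 0 -> x * (inj a * y) = 0.
Proof.
case: x y => [c z] [b e] /= ac az; rewrite te_injMl te_mulE /=.
apply: (congr2 pair); first by rewrite mulrA (mulrC c) ac mul0r.
by rewrite scalerA (mulrC c) ac scale0r add0r mulrC -scalerA az scaler0.
Qed.

Section TrivExtAtPrime.
Variables (P : A -> Prop) (P_prime : is_prime_ideal P).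

Definition local_mem (I : R -> Prop) (x : R) := exists2 s, ~ P s & I (inj s * x).

Lemma local_mem_ideal I : is_ideal I -> is_ideal (local_mem I).
Proof.
case=> I0 ID IM; split.
- by case: P_prime => _ nP1 _; exists 1; rewrite ?mulr0.
- move=> x y [s nPs Ix] [s' nPs' Iy]; exists (s * s'); first exact: notprime_mul.
  rewrite te_injM -mulrA !mulrDr; apply: ID; last exact: IM.
  by rewrite mulrCA; apply: IM.
- move=> x y [s nPs Iy]; exists s => //.
  by rewrite mulrCA; apply: IM.
Qed.

Definition local_decomp (F : {poly R}) t s (F0 Z : {poly R}) :=
  [/\ ~ P s, ~ P (F0`_t).1,
    forall i, inj s * F`_i = inj (F`_t).1 * F0`_i + Z`_i,
    forall i, (F`_t).1 * (Z`_i).1 = 0 /\ (Z`_i).1 ^+ 2 = 0 &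
    forall i, (F`_t).1 *: (Z`_i).2 = 0].

Lemma exists_local_decomp (F : {poly R}) :
  exists t s (F0 Z : {poly R}), local_decomp F t s F0 Z.
Proof.
have F_eq0 i : (size F <= i)%N -> F`_i = 0 by move=> lei; rewrite nth_default.
have [t [s [y [c [nPs yt dec]]]]] := exists_dominant_decomp P_prime A_gauss
  (f := fun i => (F`_i).1) (fun i lei => congr1 fst (F_eq0 i lei)).
set ft := (F`_t).1 in dec *.
have /choice[e' e'P] i : exists e', ft *: (F`_i).2 = ft ^+ 2 *: e' := scale_sqr _ _.
pose B := (t.+1 + size F)%N.
pose F0 := \poly_(i < B) ((y i, s *: e' i) : R).
pose Z := \poly_(i < B) ((c i, s *: ((F`_i).2 - ft *: e' i)) : R).
exists t, s, F0, Z; split=> // [|i|i|i].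
- by rewrite coef_poly ltn_addr //= yt.
- rewrite !coef_poly; case: ifP => [ltiB|/negbT]; last first.
    rewrite -leqNgt => leBi; rewrite F_eq0 ?mulr0 ?addr0 //.
    by rewrite (leq_trans _ leBi) // leq_addl.
  have [fi _ _] := dec i.
  rewrite !te_injMl /=; apply: (congr2 pair); first by rewrite fi mulrC.
  by rewrite scalerBr !scalerA (mulrC ft s) addrC subrK.
- rewrite coef_poly; case: ifP => _ /=; last by rewrite mulr0 expr0n.
  by have [_ -> ->] := dec i.
rewrite coef_poly; case: ifP => _ /=; last by rewrite scaler0.
by rewrite scalerA mulrC -scalerA scalerBr e'P scalerA -expr2 subrr scaler0.
Qed.

Lemma te_decomp_mul_eq0 (ft gt s2 : A) (Z G G0 W : {poly R}) :
  (forall a, ft * (Z`_a).1 = 0 /\ (Z`_a).1 ^+ 2 = 0) ->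
  (forall a, ft *: (Z`_a).2 = 0) ->
  ~ P s2 -> (forall b, inj s2 * G`_b = inj gt * G0`_b + W`_b) ->
  (forall b, (W`_b).1 ^+ 2 = 0) -> sqr_dvd_at P ft gt ->
  exists2 s, ~ P s & forall a b, inj s * (Z`_a * G`_b) = 0.
Proof.
move=> Zft Zft2 nPs2 Gdec W2.
move=> /(sqr_dvd_at_decomp A_gauss)[s [y [d [nPs gtE _ d2]]]].
exists (s * s2) => [|a b]; first by apply: notprime_mul.
have [ftZ Z2] := Zft a.
have Znil x : x.1 ^+ 2 = 0 -> Z`_a * x = 0 by apply: te_mul_sqr_eq0.
rewrite te_injM mulrCA -mulrA Gdec mulrDr mulrA -te_injM gtE te_injD.
rewrite (mulrC y) te_injM.
rewrite mulrDl !mulrDr -mulrA te_mul_ann // !Znil ?addr0 //.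
- by rewrite te_injMl exprMn W2 mulr0.
- by rewrite te_injMl exprMn d2 mul0r.
Qed.

Lemma local_content_regular (F0 G : {poly R}) t :
  ~ P (F0`_t).1 -> forall j, local_mem (content (F0 * G)) G`_j.
Proof.
move=> nPf; have N_ideal := local_mem_ideal (content_ideal (F0 * G)).
apply: (ideal_coefs_of_regular_coef N_ideal (p := F0) (t := t)).
  move=> x [s nPs sx]; exists (s * (F0`_t).1 ^+ 2).
    by apply: notprime_mul => //; rewrite expr2; apply: notprime_mul.
  have conjE : (((F0`_t).1, - (F0`_t).2) : R) * F0`_t = inj ((F0`_t).1 ^+ 2).
    by case: (F0`_t) => a e; rewrite te_mulE scalerN addrN expr2.
  by rewrite te_injM -conjE -!mulrA mulrCA; apply: contentMl.
by case: P_prime => _ nP1 _ k; exists 1; rewrite // mul1r; apply: content_coef.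
Qed.

Lemma local_content_of_sqr_dvd (F G F0 Z G0 W : {poly R}) t t' s s' :
  local_decomp F t s F0 Z -> local_decomp G t' s' G0 W ->
  sqr_dvd_at P (F`_t).1 (G`_t').1 ->
  forall i j, local_mem (content (F * G)) (F`_i * G`_j).
Proof.
move=> [nPs nPf0 Fdec Zft Zft2] [nPs' _ Gdec Wgt _] ftgt i j.
set ft := (F`_t).1 in Fdec Zft Zft2 ftgt.
have [sg nPsg ZG0] : exists2 sg, ~ P sg & forall a b, inj sg * (Z`_a * G`_b) = 0.
  apply: (te_decomp_mul_eq0 Zft Zft2 nPs' Gdec) => // b.
  by have [] := Wgt b.
have FG_F0G a b : inj (sg * s) * (F`_a * G`_b) = inj (sg * ft) * (F0`_a * G`_b).
  rewrite !te_injM -mulrA [inj s * _]mulrA Fdec mulrDl mulrDr ZG0 addr0.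
  by rewrite !mulrA.
have [s4 nPs4 G_j] := local_content_regular G nPf0 j.
exists (s4 * (sg * s)); first by apply: notprime_mul => //; apply: notprime_mul.
rewrite te_injM -mulrA FG_F0G mulrCA [inj s4 * _]mulrCA mulrCA; apply: contentMl.
apply: (content_transfer (d := inj (sg * s))) G_j => k.
by rewrite !coefM !mulr_sumr; apply: eq_bigr => l _; rewrite FG_F0G.
Qed.

Lemma local_content_coef_mul (F G : {poly R}) i j :
  local_mem (content (F * G)) (F`_i * G`_j).
Proof.
have [t [s [F0 [Z Fdec]]]] := exists_local_decomp F.
have [t' [s' [G0 [W Gdec]]]] := exists_local_decomp G.
have [ftgt|gtft] := sqr_dvd_at_total P_prime A_gauss (F`_t).1 (G`_t').1.
  exact: local_content_of_sqr_dvd Fdec Gdec ftgt i j.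
rewrite mulrC [_ * G`_j]mulrC.
exact: local_content_of_sqr_dvd Gdec Fdec gtft j i.
Qed.

End TrivExtAtPrime.

Lemma triv_ext_gaussian : gaussian R.
Proof.
apply/gaussianP => F G i j.
pose L s := content (F * G) (inj s * (F`_i * G`_j)).
suff : L 1 by rewrite /L mul1r.
apply: ideal1_of_avoids_primes => [|P P_prime].
  have [I0 ID IM] := content_ideal (F * G).
  split=> [|s s'|s s']; rewrite /L ?te_injD ?te_injM ?mul0r // ?mulrDl.
    exact: ID.
  by rewrite -mulrA; apply: IM.
by have [s nPs Ls] := local_content_coef_mul P_prime F G i j; exists s.
Qed.

End TrivExtSufficiency.

Section TrivExtNecessity.
Variables (A : comNzRingType) (E : lmodType A).
Local Notation R := (triv_ext A E).
Local Notation inj := (te_inj E).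

Lemma gaussian_of_triv_ext : gaussian R -> gaussian A.
Proof.
move=> /gaussianP R_gauss; apply/gaussianP => f g i j.
have := R_gauss (map_poly inj f) (map_poly inj g) i j.
rewrite -rmorphM !coef_map => /(content_map (@te_fst A E)).
by rewrite (map_polyK (@te_injK _ E)) // -te_injM te_injK.
Qed.

Lemma scale_sqr_of_triv_ext_gaussian :
  gaussian R -> forall (a : A) (e : E), exists e', a *: e = a ^+ 2 *: e'.
Proof.
move=> /gaussianP R_gauss a e.
pose c0 := inj a; pose c1 : R := (0, e).
have c1_sqr : c1 * c1 = 0 by rewrite te_mulE !scale0r mul0r addr0.
have FG : (c0%:P + c1%:P * 'X) * (c0%:P - c1%:P * 'X) = (c0 * c0)%:P.
  transitivity ((c0 * c0)%:P - (c1 * c1)%:P * 'X^2); first by rewrite !polyCM; ring.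
  by rewrite c1_sqr mul0r subr0.
have := R_gauss (c0%:P + c1%:P * 'X) (c0%:P - c1%:P * 'X) 1%N 0%N.
rewrite FG coefD coefB coefC coefCM coefX coefC coefCM coefX /=.
rewrite mulr0 subr0 add0r mulr1.
case/content_polyC => r /(congr1 snd) /=.
rewrite scale0r add0r !scaler0 addr0 scaler0 add0r => ->.
by exists r.2; rewrite expr2.
Qed.

End TrivExtNecessity.

Theorem corollary2p2 (A : comNzRingType) (E : lmodType A)
  (HE : exists e : E, e != 0) :
  gaussian (triv_ext A E) <->
  (gaussian A /\
   forall a : A, forall x : E,
     (exists e : E, x = a *: e) <-> (exists e : E, x = a ^+ 2 *: e)).
Proof.
split=> [R_gauss|[A_gauss scale_iff]].
  split=> [|a x]; first exact: gaussian_of_triv_ext.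
  split=> [[e ->]|[e ->]]; first exact: scale_sqr_of_triv_ext_gaussian.
  by exists (a *: e); rewrite scalerA expr2.
by apply: triv_ext_gaussian => // a e; apply/(scale_iff a (a *: e)); exists e.
Qed.
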